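(* Let $A$ be an algebra in a semidegenerate congruence modular variety $\mathcal{V}$ such that $K(A)$ is closed under the commutator. The following are equivalent: (1) the map $\lambda_A|_{B(Con(A))}: B(Con(A))\rightarrow B(L(A))$ is a Boolean isomorphism; (2) the map $\lambda_A|_{B(Con(A))}: B(Con(A))\rightarrow B(L(A))$ is surjective; (3) for every $\alpha\in K(A)$, if $\lambda_A(\alpha)\in B(L(A))$ then there exists an integer $n\geq 0$ with $[\alpha,\alpha]^n\in B(Con(A))$; (4) for every $\alpha\in K(A)$, $\lambda_A(\alpha)\in B(L(A))$ if and only if there exists an integer $n\geq 0$ with $[\alpha,\alpha]^n\in B(Con(A))$.
   Context: $\mathcal{V}$ is a variety of algebras of a finite signature which is congruence modular and semidegenerate (no nontrivial algebra of $\mathcal{V}$ has a one-element subalgebra; equivalently $\nabla_A$ is compact for all $A\in\mathcal{V}$). $Con(A)$ is the congruence lattice of $A$ with bounds $\Delta_A,\nabla_A$; $[\cdot,\cdot]$ is the Freese–McKenzie commutator on $Con(A)$; $K(A)$ is the set of compact (finitely generated) congruences. $[\alpha,\alpha]^0=\alpha$, $[\alpha,\alpha]^{n+1}=[[\alpha,\alpha]^n,[\alpha,\alpha]^n]$. A congruence $\phi\neq\nabla_A$ is prime if $[\alpha,\beta]\subseteq\phi$ implies $\alpha\subseteq\phi$ or $\beta\subseteq\phi$; for $\theta\in Con(A)$, $\rho(\theta)$ is the intersection of all prime congruences containing $\theta$. The reticulation $L(A)$ is the bounded distributive lattice $K(A)/{\equiv}$, where $\alpha\equiv\beta$ iff $\rho(\alpha)=\rho(\beta)$,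 and $\lambda_A:K(A)\to L(A)$ is the canonical map (it satisfies $\lambda_A(\alpha\vee\beta)=\lambda_A(\alpha)\vee\lambda_A(\beta)$, $\lambda_A([\alpha,\beta])=\lambda_A(\alpha\cap\beta)=\lambda_A(\alpha)\wedge\lambda_A(\beta)$). $B(Con(A))$ is the Boolean algebra of complemented elements of the lattice $Con(A)$ and $B(L(A))$ that of $L(A)$; it is known that $B(Con(A))\subseteq K(A)$ and $\lambda_A$ maps $B(Con(A))$ into $B(L(A))$ as an injective Boolean morphism. *)

From Stdlib Require Import List.
From mathcomp Require Import all_boot.
Set Implicit Arguments. Unset Strict Implicit. Unset Printing Implicit Defensive.

Record signature := Signature { sop : finType; sarity : sop -> nat }.

Record algebra (S : signature) := Algebra {
  carrier :> Type;
  interp : forall o : sop S, ('I_(sarity o) -> carrier) -> carrier }.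

Arguments interp {S B} o _ : rename.

Inductive term (S : signature) : Type :=
  | Var : nat -> term S
  | App : forall o : sop S, ('I_(sarity o) -> term S) -> term S.

Fixpoint eval (S : signature) (B : algebra S) (e : nat -> B) (t : term S) : B :=
  match t with
  | Var n => e n
  | App o ts => interp (B:=B) o (fun i => eval e (ts i))
  end.

(* A variety is the class of models of a set Sigma of identities (Birkhoff). *)
Definition inV (S : signature) (Sigma : term S -> term S -> Prop) (B : algebra S) : Prop :=
  forall t u, Sigma t u -> forall e : nat -> B, eval e t = eval e u.

Definition prel (T : Type) := T -> T -> Prop.
Definition subrel T (R R' : prel T) : Prop := forall x y, R x y -> R' x y.
Definition releq T (R R' : prel T) : Prop := forall x y, R x y <-> R' x y.

Definition is_con (S : signature) (B : algebra S) (R : prel B) : Prop :=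
  (forall x, R x x) /\ (forall x y, R x y -> R y x) /\
  (forall x y z, R x y -> R y z -> R x z) /\
  (forall (o : sop S) (a b : 'I_(sarity o) -> B),
      (forall i, R (a i) (b i)) -> R (interp o a) (interp o b)).

Definition Delta T : prel T := fun x y => x = y.
Definition Nabla T : prel T := fun _ _ => True.

Definition Cg (S : signature) (B : algebra S) (X : prel B) : prel B :=
  fun x y => forall th : prel B, is_con th -> subrel X th -> th x y.

Definition con_meet T (a b : prel T) : prel T := fun x y => a x y /\ b x y.
Definition con_join (S : signature) (B : algebra S) (a b : prel B) : prel B :=
  Cg (fun x y => a x y \/ b x y).

Definition compact (S : signature) (B : algebra S) (a : prel B) : Prop :=
  exists l : list (B * B), releq a (Cg (fun x y => In (x, y) l)).

Definition mix T (m : nat) (a c : nat -> T) : nat -> T :=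
  fun i => if i < m then a i else c i.

Definition centralizes (S : signature) (B : algebra S) (a b g : prel B) : Prop :=
  forall (t : term S) (m : nat) (x y u v : nat -> B),
    (forall i, a (x i) (y i)) -> (forall i, b (u i) (v i)) ->
    g (eval (mix m x u) t) (eval (mix m x v) t) ->
    g (eval (mix m y u) t) (eval (mix m y v) t).

(* [a, b] = least congruence g with C(a, b; g)  (in a congruence modular
   variety this is the Freese--McKenzie commutator) *)
Definition comm (S : signature) (B : algebra S) (a b : prel B) : prel B :=
  fun x y => forall g : prel B, is_con g -> centralizes a b g -> g x y.

Fixpoint comm_iter (S : signature) (B : algebra S) (n : nat) (a : prel B) : prel B :=
  match n with
  | 0 => a
  | n'.+1 => let c := comm_iter n' a in comm c c
  end.

Definition con_modular_variety (S : signature) (Sigma : term S -> term S -> Prop) : Prop :=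
  forall B : algebra S, inV Sigma B ->
  forall a b c : prel B, is_con a -> is_con b -> is_con c -> subrel a c ->
    releq (con_join a (con_meet b c)) (con_meet (con_join a b) c).

Definition semidegenerate (S : signature) (Sigma : term S -> term S -> Prop) : Prop :=
  forall B : algebra S, inV Sigma B -> (exists x y : B, x <> y) ->
    ~ (exists b : B, forall o : sop S, interp o (fun _ => b) = b).

Definition prime_con (S : signature) (B : algebra S) (p : prel B) : Prop :=
  is_con p /\ ~ releq p (@Nabla B) /\
  forall a b : prel B, is_con a -> is_con b -> subrel (comm a b) p ->
    subrel a p \/ subrel b p.

Definition rho (S : signature) (B : algebra S) (th : prel B) : prel B :=
  fun x y => forall p : prel B, prime_con p -> subrel th p -> p x y.

(* The reticulation L(A) = K(A)/==, with a == b iff rho a = rho b.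
   Elements of L(A) are represented by compact congruences, compared with Leq;
   lambda_A is the canonical map (identity on representatives). *)
Definition Leq (S : signature) (B : algebra S) (a b : prel B) : Prop :=
  releq (rho a) (rho b).
Definition lam (S : signature) (B : algebra S) (a : prel B) : prel B := a.
Definition Ljoin (S : signature) (B : algebra S) (a b : prel B) : prel B := con_join a b.
Definition Lmeet (S : signature) (B : algebra S) (a b : prel B) : prel B := comm a b.
Definition Ltop (S : signature) (B : algebra S) : prel B := @Nabla B.
Definition Lbot (S : signature) (B : algebra S) : prel B := @Delta B.

Definition in_BL (S : signature) (B : algebra S) (x : prel B) : Prop :=
  exists y : prel B, is_con y /\ compact y /\
    Leq (Ljoin x y) (@Ltop S B) /\ Leq (Lmeet x y) (@Lbot S B).

Definition in_BCon (S : signature) (B : algebra S) (a : prel B) : Prop :=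
  is_con a /\ exists b : prel B, is_con b /\
    releq (con_join a b) (@Nabla B) /\ releq (con_meet a b) (@Delta B).

Definition lamB_surjective (S : signature) (B : algebra S) : Prop :=
  forall x : prel B, is_con x -> compact x -> in_BL (lam x) ->
    exists a : prel B, in_BCon a /\ Leq (lam a) (lam x).

Definition lamB_boolean_iso (S : signature) (B : algebra S) : Prop :=
  (forall a : prel B, in_BCon a -> compact a /\ in_BL (lam a)) /\
  (* bounded lattice morphism (hence Boolean morphism) *)
  (forall a b : prel B, in_BCon a -> in_BCon b ->
     Leq (lam (con_join a b)) (Ljoin (lam a) (lam b)) /\
     Leq (lam (con_meet a b)) (Lmeet (lam a) (lam b))) /\
  Leq (lam (@Delta B)) (@Lbot S B) /\ Leq (lam (@Nabla B)) (@Ltop S B) /\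
  (forall a b : prel B, in_BCon a -> in_BCon b -> Leq (lam a) (lam b) -> releq a b) /\
  @lamB_surjective S B.

(* Two properties of a complemented congruence be, with complement ga, carry the proof.
   It is compact: Nabla is compact by semidegeneracy (a reduced-power argument), so
   be \/ ga = Nabla already holds for finitely many generators of be and of ga, and the
   modular law cuts be down to its generators.  It is idempotent, be = [be, be]: in the
   algebra A(be) of be-related pairs, the congruence generated by Delta_{be,be} and
   ga x ga identifies all diagonal pairs, so the class of a diagonal pair (a, a) is closed
   under the operations and, by semidegeneracy, the congruence is total; both generating
   parts preserve the set of pairs lying in [be, be], hence so does the whole congruence.
   On the other side, for compact th we have th <= rho(al) iff [th, th]^n <= al for some n:
   by Zorn there is a maximal congruence above al avoiding every (compact) [th, th]^n, and
   it is prime because [a, b] <= ph implies [ph \/ a, ph \/ b] <= ph in a modular variety.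
   So if lambda(al) = lambda(be) with be Boolean, then be <= al and [al, al]^n <= be for some
   n, whence [al, al]^n = be by idempotence; the remaining implications are formal. *)

From mathcomp Require Import all_boot zify.
From mathcomp Require boolp classical_sets.
From Stdlib Require Import FunctionalExtensionality PropExtensionality.
From Stdlib Require Import Classical IndefiniteDescription.
From Stdlib Require List.

Set Implicit Arguments.
Unset Strict Implicit.
Unset Printing Implicit Defensive.

(** * Congruences and the commutator *)

Section Congruences.
Variables (S : signature) (B : algebra S).
Implicit Types (X Y th a b c : prel B).

Lemma is_con_Cg X : is_con (Cg X).
Proof.
split; [|split; [|split]].
- by move=> x th [].
- by move=> x y H th hth hX; case: (hth) => _ [hs _]; apply: hs; apply: H.
- move=> x y z H1 H2 th hth hX; case: (hth) => _ [_ [ht _]].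
  by apply: (ht _ y); [apply: H1 | apply: H2].
- by move=> o a b H th hth hX; case: (hth) => _ [_ [_ hc]]; apply: hc => i; apply: H.
Qed.

Lemma sub_Cg X : subrel X (Cg X).
Proof. by move=> x y H th _; apply. Qed.

Lemma Cg_min X th : is_con th -> subrel X th -> subrel (Cg X) th.
Proof. by move=> hth hX x y; apply. Qed.

Lemma Cg_mono X Y : subrel X Y -> subrel (Cg X) (Cg Y).
Proof. by move=> h; apply: Cg_min (is_con_Cg Y) _ => x y /h /sub_Cg. Qed.

Section OneCongruence.
Variables (th : prel B) (hth : is_con th).

Lemma con_refl x : th x x.
Proof. by case: hth => hr _; apply: hr. Qed.

Lemma con_sym x y : th x y -> th y x.
Proof. by case: hth => _ [hs _]; apply: hs. Qed.

Lemma con_trans x y z : th x y -> th y z -> th x z.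
Proof. by case: hth => _ [_ [ht _]]; apply: ht. Qed.

Lemma con_interp o (u v : 'I_(sarity o) -> B) :
  (forall i, th (u i) (v i)) -> th (interp o u) (interp o v).
Proof. by case: hth => _ [_ [_ hc]]; apply: hc. Qed.

Lemma con_eval (e e' : nat -> B) t :
  (forall i, th (e i) (e' i)) -> th (eval e t) (eval e' t).
Proof. by move=> H; elim: t => [n|o ts IH] /=; [apply: H | apply: con_interp]. Qed.

End OneCongruence.

Lemma eval_ext (e e' : nat -> B) t : (forall i, e i = e' i) -> eval e t = eval e' t.
Proof. by move=> /functional_extensionality ->. Qed.

Lemma is_con_Delta : is_con (@Delta B).
Proof.
split; [|split; [|split]]; rewrite /Delta //; first by move=> x y z -> ->.
by move=> o u v /functional_extensionality ->.
Qed.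

Lemma is_con_meet a b : is_con a -> is_con b -> is_con (con_meet a b).
Proof.
move=> ha hb; split; [|split; [|split]].
- by move=> x; split; apply: con_refl.
- by move=> x y [] ? ?; split; apply: con_sym.
- by move=> x y z [] ? ? [] ? ?; split; [apply: (con_trans ha) | apply: (con_trans hb)]; eauto.
- by move=> o u v H; split; apply: con_interp => // i; case: (H i).
Qed.

Lemma is_con_join a b : is_con (con_join a b).
Proof. exact: is_con_Cg. Qed.

Lemma con_joinl a b : subrel a (con_join a b).
Proof. by move=> x y H; apply: sub_Cg; left. Qed.

Lemma con_joinr a b : subrel b (con_join a b).
Proof. by move=> x y H; apply: sub_Cg; right. Qed.

Lemma con_join_min a b c : is_con c -> subrel a c -> subrel b c -> subrel (con_join a b) c.
Proof. by move=> hc ha hb; apply: Cg_min => // x y [/ha | /hb]. Qed.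

Lemma con_join_mono a b a' b' :
  subrel a a' -> subrel b b' -> subrel (con_join a b) (con_join a' b').
Proof.
move=> h1 h2; apply: con_join_min; first exact: is_con_join.
- by move=> x y /h1; apply: con_joinl.
- by move=> x y /h2; apply: con_joinr.
Qed.

Lemma con_join_releq a b a' b' :
  releq a a' -> releq b b' -> releq (con_join a b) (con_join a' b').
Proof. by move=> h1 h2 x y; split; apply: con_join_mono => u v; rewrite (h1, h2). Qed.

Lemma con_joinC a b : subrel (con_join a b) (con_join b a).
Proof. apply: con_join_min; [exact: is_con_join | exact: con_joinr | exact: con_joinl]. Qed.

End Congruences.

Section Commutator.
Variables (S : signature) (B : algebra S).
Implicit Types a b g : prel B.

Lemma is_con_comm a b : is_con (comm a b).
Proof.
split; [|split; [|split]].
- by move=> x g hg _; apply: con_refl.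
- by move=> x y H g hg hc; apply: con_sym (H g hg hc).
- by move=> x y z H1 H2 g hg hc; exact: (con_trans hg (H1 g hg hc) (H2 g hg hc)).
- by move=> o u v H g hg hc; apply: con_interp => // i; apply: H.
Qed.

Lemma centralizes_comm a b : centralizes a b (comm a b).
Proof. by move=> t m x y u v hx hu H g hg hc; apply: (hc t m x y u v) => //; apply: H. Qed.

Lemma comm_min a b g : is_con g -> centralizes a b g -> subrel (comm a b) g.
Proof. by move=> hg hc x y; apply. Qed.

Lemma centralizes_mod_left g b : is_con g -> centralizes g b g.
Proof.
move=> hg t m x y u v hx hu H.
apply: (con_trans hg _ (con_trans hg H _)); apply: (con_eval hg) => i;
  rewrite /mix; case: ifP => _; try exact: con_refl.
- exact: (con_sym hg (hx i)).
- exact: hx.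
Qed.

Lemma centralizes_mod_right a g : is_con g -> centralizes a g g.
Proof.
move=> hg t m x y u v hx hu H.
by apply: con_eval => // i; rewrite /mix; case: ifP => _; [apply: con_refl | apply: hu].
Qed.

Lemma comm_subl a b : is_con a -> subrel (comm a b) a.
Proof. by move=> ha; apply: (comm_min ha (centralizes_mod_left ha)). Qed.

Lemma comm_subr a b : is_con b -> subrel (comm a b) b.
Proof. by move=> hb; apply: (comm_min hb (centralizes_mod_right hb)). Qed.

Lemma comm_sub_meet a b : is_con a -> is_con b -> subrel (comm a b) (con_meet a b).
Proof. by move=> ha hb x y h; split; [apply: comm_subl h | apply: comm_subr h]. Qed.

Lemma centralizes_anti a b a' b' g :
  subrel a' a -> subrel b' b -> centralizes a b g -> centralizes a' b' g.
Proof. by move=> h1 h2 hc t m x y u v hx hu; apply: hc => i; [apply: h1 | apply: h2]. Qed.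

Lemma comm_mono a b a' b' : subrel a' a -> subrel b' b -> subrel (comm a' b') (comm a b).
Proof. by move=> h1 h2 x y H g hg hc; apply: H => //; apply: centralizes_anti hc. Qed.

Lemma is_con_comm_iter n a : is_con a -> is_con (comm_iter n a).
Proof. by case: n => [|n] //= _; apply: is_con_comm. Qed.

Lemma comm_iter_antitone n m a : is_con a -> n <= m -> subrel (comm_iter m a) (comm_iter n a).
Proof.
move=> ha; elim: m => [|m IH]; first by rewrite leqn0 => /eqP ->.
rewrite leq_eqVlt => /orP [/eqP -> // | /IH h] x y /comm_subl H.
by apply/h/H/is_con_comm_iter.
Qed.

Lemma comm_iter_mono n a b : subrel a b -> subrel (comm_iter n a) (comm_iter n b).
Proof. by elim: n => [|n IH] //= h; apply: comm_mono; apply: IH. Qed.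

Lemma compact_comm_iter n a :
  (forall a b, is_con a -> is_con b -> compact a -> compact b -> compact (comm a b)) ->
  is_con a -> compact a -> compact (comm_iter n a).
Proof.
move=> hK ha hca; elim: n => [|n IH] //=.
by apply: hK => //; apply: is_con_comm_iter.
Qed.

Lemma sub_rho a : subrel a (rho a).
Proof. by move=> x y H p _; apply. Qed.

Lemma rho_mono a b : subrel a b -> subrel (rho a) (rho b).
Proof. by move=> h x y H p hp hb; apply: H => // u v /h /hb. Qed.

Lemma rho_releq a b : releq a b -> releq (rho a) (rho b).
Proof. by move=> h x y; split; apply: rho_mono => u v /h. Qed.

Lemma rho_Nabla x y : rho (@Nabla B) x y.
Proof. by move=> p [_ [hn _]] hs; exfalso; apply: hn => u v; split => // _; apply: hs. Qed.

Lemma rho_comm a b : is_con a -> is_con b -> releq (rho (comm a b)) (con_meet (rho a) (rho b)).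
Proof.
move=> ha hb x y; split.
- by move=> H; split; apply: rho_mono H => u v; [apply: comm_subl | apply: comm_subr].
- move=> [H1 H2] p hp hab; case: (hp) => _ [_ hpr].
  by case: (hpr a b ha hb hab) => h; [apply: H1 | apply: H2].
Qed.

Lemma rho_meet a b : is_con a -> is_con b -> releq (rho (con_meet a b)) (con_meet (rho a) (rho b)).
Proof.
move=> ha hb x y; split.
- by move=> H; split; apply: rho_mono H => u v [].
- move/(rho_comm ha hb); apply: rho_mono; exact: comm_sub_meet.
Qed.

Lemma rho_comm_iter n a : is_con a -> releq (rho (comm_iter n a)) (rho a).
Proof.
move=> ha; elim: n => [|n IH] //= x y.
have hc := is_con_comm_iter n ha.
by rewrite (rho_comm hc hc) -IH; split => [[]|].
Qed.

End Commutator.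

(** * The algebra of pairs and saturated sets *)

Lemma sig_eq (T : Type) (P : T -> Prop) (p q : {x | P x}) : sval p = sval q -> p = q.
Proof.
by case: p q => [x hx] [y hy] /= e; subst y; congr exist; apply: boolp.Prop_irrelevance.
Qed.

Definition hom (S : signature) (R B : algebra S) (f : R -> B) : Prop :=
  forall o (args : 'I_(sarity o) -> R), f (interp o args) = interp o (fun i => f (args i)).

Lemma is_con_preim (S : signature) (R B : algebra S) (f : R -> B) (th : prel B) :
  hom f -> is_con th -> is_con (fun p q => th (f p) (f q)).
Proof.
move=> hf hth; split; [|split; [|split]].
- by move=> x; apply: con_refl.
- by move=> x y; apply: con_sym.
- by move=> x y z; apply: con_trans.
- by move=> o u v H; rewrite !hf; apply: con_interp.
Qed.

Lemma eval_hom (S : signature) (R B : algebra S) (f : R -> B) (e : nat -> R) t :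
  hom f -> f (eval e t) = eval (fun n => f (e n)) t.
Proof.
move=> hf; elim: t => [n|o ts IH] //=; rewrite hf.
by congr interp; apply: functional_extensionality => i; apply: IH.
Qed.

Lemma eval_homE (S : signature) (R B : algebra S) (f : R -> B) (E : nat -> R) (e : nat -> B) t :
  hom f -> (forall i, f (E i) = e i) -> f (eval E t) = eval e t.
Proof. by move=> hf H; rewrite eval_hom //; apply: eval_ext. Qed.

Section PairAlgebra.
Variables (S : signature) (B : algebra S) (al : prel B) (hal : is_con al).

Definition pair_car := {p : B * B | al p.1 p.2}.

Definition pair_op o (args : 'I_(sarity o) -> pair_car) : pair_car :=
  exist _ (interp o (fun i => (sval (args i)).1), interp o (fun i => (sval (args i)).2))
    (con_interp hal (fun i => proj2_sig (args i))).

Definition pair_alg : algebra S := @Algebra S pair_car pair_op.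

Definition pfst (p : pair_alg) : B := (sval p).1.
Definition psnd (p : pair_alg) : B := (sval p).2.
Definition mkpair x y (h : al x y) : pair_alg := exist _ (x, y) h.
Definition pdiag x : pair_alg := mkpair (con_refl hal x).

Lemma hom_pfst : hom pfst. Proof. by []. Qed.
Lemma hom_psnd : hom psnd. Proof. by []. Qed.

Lemma pair_rel p : al (pfst p) (psnd p).
Proof. exact: (proj2_sig p). Qed.

Lemma pair_eq p q : pfst p = pfst q -> psnd p = psnd q -> p = q.
Proof.
move=> e1 e2; apply: sig_eq; move: e1 e2; rewrite /pfst /psnd.
by case: (sval p) (sval q) => [x y] [x' y'] /= -> ->.
Qed.

Lemma hom_pdiag : hom pdiag.
Proof. by move=> o args; apply: pair_eq. Qed.

Lemma pdiag_pfst p : pfst p = psnd p -> p = pdiag (pfst p).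
Proof. by move=> e; apply: pair_eq. Qed.

Lemma inV_pair_alg Sigma : inV Sigma B -> inV Sigma pair_alg.
Proof.
move=> hB t u hs e; apply: pair_eq;
  rewrite !(eval_hom e _ hom_pfst, eval_hom e _ hom_psnd); exact: hB.
Qed.

Definition fst_rel (de : prel B) : prel pair_alg := fun p q => de (pfst p) (pfst q).
Definition snd_rel (de : prel B) : prel pair_alg := fun p q => de (psnd p) (psnd q).

Lemma is_con_fst_rel de : is_con de -> is_con (fst_rel de).
Proof. exact: is_con_preim (@hom_pfst). Qed.

Lemma is_con_snd_rel de : is_con de -> is_con (snd_rel de).
Proof. exact: is_con_preim (@hom_psnd). Qed.

End PairAlgebra.

Arguments fst_rel {S B al} hal de.
Arguments snd_rel {S B al} hal de.

Definition upd0 (T : Type) (e : nat -> T) (z : T) : nat -> T :=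
  fun i => if i is 0 then z else e i.

Fixpoint tsubst (S : signature) (s : nat -> term S) (t : term S) : term S :=
  match t with
  | Var n => s n
  | App o ts => @App S o (fun i => tsubst s (ts i))
  end.

Lemma eval_tsubst (S : signature) (B : algebra S) (e : nat -> B) s t :
  eval e (tsubst s t) = eval (fun n => eval e (s n)) t.
Proof.
elim: t => [n|o ts IH] //=.
by congr interp; apply: functional_extensionality => i; apply: IH.
Qed.

Definition saturates (S : signature) (B : algebra S) (th : prel B) (P : B -> Prop) : Prop :=
  forall x y, th x y -> (P x <-> P y).

Section Saturation.
Variables (S : signature) (B : algebra S) (P : B -> Prop).

(* No unary polynomial separates x from y with respect to P. *)
Definition poly_equiv (x y : B) : Prop :=
  forall t (e : nat -> B), P (eval (upd0 e x) t) <-> P (eval (upd0 e y) t).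

Lemma poly_equiv_interp1 o (j : 'I_(sarity o)) (d : 'I_(sarity o) -> B) x y :
  poly_equiv x y ->
  poly_equiv (interp o (fun i => if i == j then x else d i))
             (interp o (fun i => if i == j then y else d i)).
Proof.
move=> H t e; set n := sarity o.
(* In tsubst s t, variable 0 is the moving argument, 1..n are the fixed arguments d,
   and k + n stands for the variable k of t. *)
pose C := @App S o (fun i : 'I_n => if i == j then Var S 0 else Var S (nat_of_ord i).+1).
pose s (k : nat) := if k is 0 then C else Var S (k + n).
pose e' (k : nat) := if k < n.+1 then d (insubd j k.-1) else e (k - n).
suff key z : eval (upd0 e' z) (tsubst s t)
           = eval (upd0 e (interp o (fun i => if i == j then z else d i))) t.
  by rewrite -!key; apply: H.
rewrite eval_tsubst; apply: eval_ext => -[|k] /=.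
- congr interp; apply: functional_extensionality => i; case: eqP => // _ /=.
  rewrite /e' ltnS ltn_ord /=; congr d; apply: val_inj; rewrite /= insubdK //; exact: ltn_ord.
- rewrite /e' /= ifF; last by lia.
  by congr e; lia.
Qed.

Lemma poly_equiv_interp o (u v : 'I_(sarity o) -> B) :
  (forall i, poly_equiv (u i) (v i)) -> poly_equiv (interp o u) (interp o v).
Proof.
move=> H; set n := sarity o.
pose w (j : nat) := interp o (fun i : 'I_n => if i < j then v i else u i).
have w0 : w 0 = interp o u by congr interp; apply: functional_extensionality.
have wn : w n = interp o v.
  by congr interp; apply: functional_extensionality => i; rewrite ltn_ord.
suff step j : j <= n -> poly_equiv (interp o u) (w j) by rewrite -wn; apply: step.
elim: j => [|j IH] hj t e; first by rewrite w0.
pose jj : 'I_n := Ordinal hj.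
pose d (i : 'I_n) := if i < j then v i else u i.
have E1 : w j = interp o (fun i => if i == jj then u jj else d i).
  by congr interp; apply: functional_extensionality => i; case: eqP => [->|]; rewrite /d //= ltnn.
have E2 : w j.+1 = interp o (fun i => if i == jj then v jj else d i).
  congr interp; apply: functional_extensionality => i.
  case: eqP => [->|hne]; rewrite /d /= ?ltnSn // ltnS leq_eqVlt.
  by case: eqP => //= hij; case: hne; apply: val_inj.
have hs := poly_equiv_interp1 jj d (H jj); rewrite -E1 -E2 in hs.
by rewrite (IH (ltnW hj) t e); apply: hs.
Qed.

Lemma is_con_poly_equiv : is_con poly_equiv.
Proof.
split; [|split; [|split]].
- by [].
- by move=> x y H t e; rewrite H.
- by move=> x y z H1 H2 t e; rewrite H1 H2.
- exact: poly_equiv_interp.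
Qed.

End Saturation.

Section SaturationLemmas.
Variables (S : signature) (B : algebra S).
Implicit Types (G th : prel B) (P : B -> Prop).

Lemma saturates_Cg G P :
  (forall t (e : nat -> B) x y, G x y -> (P (eval (upd0 e x) t) <-> P (eval (upd0 e y) t))) ->
  saturates (Cg G) P.
Proof.
move=> H x y hxy.
have : poly_equiv P x y by apply: (Cg_min (is_con_poly_equiv P)) hxy => u v huv t e; apply: H.
by move=> /(_ (Var S 0) (fun _ => x)).
Qed.

Lemma saturates_join th1 th2 P : is_con th1 -> is_con th2 ->
  saturates th1 P -> saturates th2 P -> saturates (con_join th1 th2) P.
Proof.
move=> h1 h2 s1 s2; apply: saturates_Cg => t e x y hxy.
have upd_rel th : is_con th -> th x y -> th (eval (upd0 e x) t) (eval (upd0 e y) t).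
  by move=> hth hth'; apply: (con_eval hth) => -[|i] //=; apply: con_refl.
by case: hxy => [/(upd_rel _ h1) /s1 | /(upd_rel _ h2) /s2].
Qed.

End SaturationLemmas.

(** * Commutator theory in a modular variety *)

Section Modularity.
Variables (S : signature) (Sigma : term S -> term S -> Prop).
Hypothesis hmod : con_modular_variety Sigma.

Lemma modular_law (B : algebra S) (hB : inV Sigma B) (a b c : prel B) :
  is_con a -> is_con b -> is_con c -> subrel a c ->
  subrel (con_meet (con_join a b) c) (con_join a (con_meet b c)).
Proof. by move=> ha hb hc hac x y /(hmod hB ha hb hc hac). Qed.

Lemma shifting (B : algebra S) (hB : inV Sigma B) (al be ga : prel B) :
  is_con al -> is_con be -> is_con ga ->
  (forall x y, al x y -> be x y -> ga x y) ->
  forall a b c d, al a c -> al b d -> be a b -> be c d -> ga a b -> ga c d.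
Proof.
move=> hal hbe hga hmeet a b c d hac hbd hab hcd gab.
pose th0 := fst_rel hbe (@Delta B).
pose alal := con_meet (fst_rel hbe al) (snd_rel hbe al).
pose ka := snd_rel hbe ga.
have c0 : is_con th0 by apply/is_con_fst_rel/is_con_Delta.
have ca : is_con alal by apply: is_con_meet; [apply: is_con_fst_rel | apply: is_con_snd_rel].
have ck : is_con ka by apply: is_con_snd_rel.
pose x := con_meet th0 ka.
have cx : is_con x by apply: is_con_meet.
pose pcc := pdiag hbe c; pose pcd := mkpair hbe hcd.
have J : con_join x alal pcc pcd.
  apply: (con_trans (is_con_join _ _) (y := pdiag hbe a)).
    by apply: con_joinr; split; apply: (con_sym hal).
  apply: (con_trans (is_con_join _ _) (y := mkpair hbe hab)); first by apply: con_joinl.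
  by apply: con_joinr.
have M : con_meet (con_join x alal) th0 pcc pcd by [].
have K : subrel (con_join x (con_meet alal th0)) ka.
  apply: con_join_min => // p q; first by case.
  move=> [[_ h2] h0]; apply: hmeet => //.
  apply: (con_trans hbe (con_sym hbe (pair_rel p))); rewrite [pfst p]h0; exact: pair_rel.
have hpair := inV_pair_alg (hal := hbe) hB.
exact: (K _ _ (modular_law hpair cx ca c0 (fun p q (h : x p q) => proj1 h) M)).
Qed.

End Modularity.

Section DeltaPairs.
Variables (S : signature) (Sigma : term S -> term S -> Prop).
Hypothesis hmod : con_modular_variety Sigma.
Variables (B : algebra S) (hB : inV Sigma B) (al : prel B) (hal : is_con al).
Implicit Types be de : prel B.

Local Notation pair := (pair_alg hal).
Local Notation pdiag := (pdiag hal).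
Local Notation mkpair := (mkpair hal).
Local Notation fst_rel := (fst_rel hal).
Local Notation snd_rel := (snd_rel hal).

Let hpair : inV Sigma pair := inV_pair_alg hB.

Definition Delta_pairs be : prel pair :=
  Cg (fun p q => be (pfst p) (pfst q) /\ pfst p = psnd p /\ pfst q = psnd q).

Definition pairs_in de (p : pair) : Prop := de (pfst p) (psnd p).

Lemma is_con_Delta_pairs be : is_con (Delta_pairs be).
Proof. exact: is_con_Cg. Qed.

Lemma Delta_pairs_pdiag be x y : be x y -> Delta_pairs be (pdiag x) (pdiag y).
Proof. by move=> h; apply: sub_Cg. Qed.

Lemma Delta_pairs_sub be : is_con be ->
  subrel (Delta_pairs be) (con_meet (fst_rel be) (snd_rel be)).
Proof.
move=> hbe; apply: Cg_min.
  by apply: is_con_meet; [apply: is_con_fst_rel | apply: is_con_snd_rel].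
by move=> p q [h [e1 e2]]; split => //; rewrite /snd_rel -e1 -e2.
Qed.

Lemma pfst_eval_mix m (p q : nat -> pair) t :
  pfst (eval (mix m p q) t) = eval (mix m (fun i => pfst (p i)) (fun i => pfst (q i))) t.
Proof. by apply: eval_homE; [exact: hom_pfst | move=> i; rewrite /mix; case: ifP]. Qed.

Lemma psnd_eval_mix m (p q : nat -> pair) t :
  psnd (eval (mix m p q) t) = eval (mix m (fun i => psnd (p i)) (fun i => psnd (q i))) t.
Proof. by apply: eval_homE; [exact: hom_psnd | move=> i; rewrite /mix; case: ifP]. Qed.

Lemma centralizes_saturates be de : is_con be ->
  centralizes be al de -> saturates (Delta_pairs be) (pairs_in de).
Proof.
move=> hbe hcent; apply: saturates_Cg => t e p q [hpq [ep eq]].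
have upd0E r : eval (upd0 e r) t = eval (mix 1 (fun _ => r) e) t by apply: eval_ext => -[].
rewrite /pairs_in !upd0E !pfst_eval_mix !psnd_eval_mix /= -ep -eq.
by split; apply: hcent => // i; [apply: pair_rel | apply: (con_sym hbe) | apply: pair_rel].
Qed.

Lemma saturates_centralizes be de :
  saturates (Delta_pairs be) (pairs_in de) -> centralizes be al de.
Proof.
move=> hs t m x y u v hx hu.
have HE : Delta_pairs be (eval (mix m (fun i => pdiag (x i)) (fun i => mkpair (hu i))) t)
                          (eval (mix m (fun i => pdiag (y i)) (fun i => mkpair (hu i))) t).
  apply: (con_eval (is_con_Delta_pairs be)) => i; rewrite /mix.
  by case: ifP => _; [apply: Delta_pairs_pdiag | apply: con_refl (is_con_Delta_pairs be) _].
by move/hs: HE; rewrite /pairs_in !pfst_eval_mix !psnd_eval_mix => -[+ _]; apply.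
Qed.

Lemma Delta_pairs_join be1 be2 : is_con be1 -> is_con be2 ->
  subrel (Delta_pairs (con_join be1 be2)) (con_join (Delta_pairs be1) (Delta_pairs be2)).
Proof.
move=> h1 h2; set J := con_join (Delta_pairs be1) (Delta_pairs be2).
have cW : is_con (fun x y => J (pdiag x) (pdiag y)).
  exact: is_con_preim (@hom_pdiag _ _ _ hal) (is_con_join _ _).
have hW : subrel (con_join be1 be2) (fun x y => J (pdiag x) (pdiag y)).
  by apply: con_join_min => // x y h; [apply: con_joinl | apply: con_joinr];
    apply: Delta_pairs_pdiag.
apply: Cg_min; first exact: is_con_join.
move=> p q [h [ep eq]]; rewrite (pdiag_pfst ep) (pdiag_pfst eq); exact: hW.
Qed.

Lemma centralizes_joinl be1 be2 de : is_con be1 -> is_con be2 ->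
  centralizes be1 al de -> centralizes be2 al de -> centralizes (con_join be1 be2) al de.
Proof.
move=> h1 h2 c1 c2; apply: saturates_centralizes => p q /(Delta_pairs_join h1 h2).
by apply: saturates_join; [apply: is_con_Delta_pairs | apply: is_con_Delta_pairs |
  apply: centralizes_saturates c1 | apply: centralizes_saturates c2].
Qed.

Lemma saturates_fst_eq ga de : is_con ga -> is_con de -> saturates ga (pairs_in de) ->
  forall p q, ga p q -> pfst p = pfst q -> de (psnd p) (psnd q).
Proof.
move=> hga hde hs p q hpq e1.
have hpq2 : al (psnd p) (psnd q).
  by apply: (con_trans hal (con_sym hal (pair_rel p))); rewrite e1; apply: pair_rel.
have : ga (pdiag (psnd p)) (mkpair hpq2).
  apply: (shifting hmod hpair (al := snd_rel (@Delta B)) (be := fst_rel (@Delta B))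
            _ _ hga _ _ _ e1 _ hpq) => //.
  - exact/is_con_snd_rel/is_con_Delta.
  - exact/is_con_fst_rel/is_con_Delta.
  - by move=> x y h2 h1; rewrite (pair_eq h1 h2); apply: con_refl.
by move=> /hs h; apply/h; apply: con_refl.
Qed.

Lemma centralizes_mod_mono be de de' : is_con be -> is_con de -> is_con de' -> subrel de de' ->
  centralizes be al de -> centralizes be al de'.
Proof.
move=> hbe hde hde' hsub hcent.
have hs := centralizes_saturates hbe hcent.
have hfst := saturates_fst_eq (is_con_Delta_pairs be) hde hs.
have one p q : Delta_pairs be p q -> pairs_in de' p -> pairs_in de' q.
  move=> hpq hp; have [hu _] := Delta_pairs_sub hbe hpq.
  apply: (shifting hmod hpair (al := Delta_pairs be) (be := fst_rel (@Delta B))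
            (ga := snd_rel de') _ _ _ _ (a := pdiag (pfst p)) (b := p)
            (c := pdiag (pfst q)) (d := q)) => //.
  - exact: is_con_Delta_pairs.
  - exact/is_con_fst_rel/is_con_Delta.
  - exact: is_con_snd_rel.
  - by move=> x y h1 h2; apply/hsub/hfst.
  - exact: Delta_pairs_pdiag.
apply: saturates_centralizes => // p q hpq; split; first exact: one.
by apply: one; apply: con_sym (is_con_Delta_pairs be) _ _ hpq.
Qed.

Lemma Delta_pairs_transfer be d0 : is_con d0 -> subrel d0 al ->
  saturates (Delta_pairs be) (pairs_in d0) ->
  forall p q, Delta_pairs be p q -> d0 (pfst p) (pfst q) -> d0 (psnd p) (psnd q).
Proof.
move=> hd0 hsub hs p q hpq h1.
pose dd := con_meet (fst_rel d0) (snd_rel d0).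
have cdd : is_con dd by apply: is_con_meet; [apply: is_con_fst_rel | apply: is_con_snd_rel].
pose D := con_join (Delta_pairs be) dd.
have cD : is_con D by apply: is_con_join.
have sD : saturates D (pairs_in d0).
  apply: saturates_join => //; first exact: is_con_Delta_pairs.
  move=> x y [hx1 hx2]; rewrite /pairs_in; split => h.
  - by apply: (con_trans hd0 (con_sym hd0 hx1)); apply: (con_trans hd0 h hx2).
  - by apply: (con_trans hd0 hx1); apply: (con_trans hd0 h (con_sym hd0 hx2)).
have hfst := saturates_fst_eq cD hd0 sD.
have hr : al (pfst p) (psnd q) by apply: (con_trans hal (hsub _ _ h1)); apply: pair_rel.
pose eta0 := fst_rel (@Delta B).
have c0 : is_con eta0 by apply/is_con_fst_rel/is_con_Delta.
have J : con_join dd eta0 p q.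
  apply: (con_trans (is_con_join _ _) (y := mkpair hr)); first by apply: con_joinr.
  by apply: con_joinl; split => //; apply: con_refl.
have M : con_meet (con_join dd eta0) D p q by split => //; apply: con_joinl.
have K : subrel (con_join dd (con_meet eta0 D)) (snd_rel d0).
  apply: con_join_min; first exact: is_con_snd_rel.
  - by move=> x y [].
  - by move=> x y [e hx]; apply: hfst.
exact: (K _ _ (modular_law hmod hpair cdd c0 cD (con_joinr (a := Delta_pairs be) (b := dd)) M)).
Qed.

Lemma centralizes_sym be d0 : is_con be -> is_con d0 -> subrel d0 al ->
  centralizes be al d0 -> centralizes al be d0.
Proof.
move=> hbe hd0 hsub hcent t m x y u v hx hu.
have HE : Delta_pairs be (eval (mix m (fun i => mkpair (hx i)) (fun i => pdiag (u i))) t)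
                          (eval (mix m (fun i => mkpair (hx i)) (fun i => pdiag (v i))) t).
  apply: (con_eval (is_con_Delta_pairs be)) => i; rewrite /mix.
  by case: ifP => _; [apply: con_refl (is_con_Delta_pairs be) _ | apply: Delta_pairs_pdiag].
have := Delta_pairs_transfer hd0 hsub (centralizes_saturates hbe hcent) HE.
by rewrite !pfst_eval_mix !psnd_eval_mix; apply.
Qed.

End DeltaPairs.

Arguments Delta_pairs {S B al} hal be.
Arguments pairs_in {S B al} hal de p.

Section ModularCommutator.
Variables (S : signature) (Sigma : term S -> term S -> Prop).
Hypothesis hmod : con_modular_variety Sigma.
Variables (B : algebra S) (hB : inV Sigma B).
Implicit Types a b d ph : prel B.

Lemma comm_subC a b : is_con a -> is_con b -> subrel (comm a b) (comm b a).
Proof.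
move=> ha hb; apply: comm_min; first exact: is_con_comm.
apply: (centralizes_sym hmod hB ha hb (is_con_comm b a) (comm_subr ha)).
exact: centralizes_comm.
Qed.

Lemma centralizes_of_comm a b d : is_con a -> is_con b -> is_con d ->
  subrel (comm a b) d -> centralizes a b d.
Proof.
move=> ha hb hd hs.
exact: (centralizes_mod_mono hmod hB hb ha (is_con_comm a b) hd hs
         (centralizes_comm (a := a) (b := b))).
Qed.

Lemma comm_join_sub a b ph : is_con a -> is_con b -> is_con ph ->
  subrel (comm a b) ph -> subrel (comm (con_join ph a) (con_join ph b)) ph.
Proof.
move=> ha hb hph hs.
have c1 : centralizes b a ph.
  by apply: centralizes_of_comm => // x y h; apply: hs; apply: comm_subC hb ha _ _ h.
have c2 : centralizes (con_join ph b) a ph.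
  exact: (centralizes_joinl ha hph hb (centralizes_mod_left hph) c1).
have c3 : centralizes a (con_join ph b) ph.
  apply: centralizes_of_comm => //; first exact: is_con_join.
  by move=> x y h; apply: (comm_min hph c2); apply: comm_subC => //; apply: is_con_join.
have c4 : centralizes (con_join ph a) (con_join ph b) ph.
  exact: (centralizes_joinl (is_con_join ph b) hph ha (centralizes_mod_left hph) c3).
exact: comm_min.
Qed.

End ModularCommutator.

(** * Complemented congruences in a semidegenerate variety *)

Section Quotient.
Variables (S : signature) (B : algebra S) (th : prel B) (hth : is_con th).

Definition quot_car := {P : B -> Prop | exists x, P = th x}.

Definition qcls (x : B) : quot_car := exist _ (th x) (ex_intro _ x erefl).

Definition qrep (q : quot_car) : B :=
  sval (constructive_indefinite_description _ (proj2_sig q)).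

Lemma qrep_spec q : sval q = th (qrep q).
Proof. by rewrite /qrep; case: constructive_indefinite_description. Qed.

Lemma qcls_eq x y : th x y -> qcls x = qcls y.
Proof.
move=> h; apply: sig_eq; apply: functional_extensionality => z /=.
apply: propositional_extensionality; split.
- exact: (con_trans hth (con_sym hth h)).
- exact: (con_trans hth h).
Qed.

Lemma qcls_inj x y : qcls x = qcls y -> th x y.
Proof. by move=> /(f_equal sval) /= ->; apply: con_refl. Qed.

Lemma qrepK q : qcls (qrep q) = q.
Proof. by apply: sig_eq; rewrite /= -qrep_spec. Qed.

Lemma qclsK x : th (qrep (qcls x)) x.
Proof.
have /= E := qrep_spec (qcls x).
by apply: (con_sym hth); rewrite E; apply: con_refl.
Qed.

Definition quot_alg : algebra S :=
  @Algebra S quot_car (fun o args => qcls (interp o (fun i => qrep (args i)))).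

Lemma eval_quot (e : nat -> quot_alg) t : eval e t = qcls (eval (fun n => qrep (e n)) t).
Proof.
elim: t => [n|o ts IH] /=; first by rewrite qrepK.
by apply: qcls_eq; apply: con_interp => // i; rewrite IH; apply: qclsK.
Qed.

Lemma inV_quot_alg Sigma : inV Sigma B -> inV Sigma quot_alg.
Proof. by move=> hB t u hs e; rewrite !eval_quot (hB t u hs). Qed.

End Quotient.

(* The class of b is a one-element subalgebra of the quotient. *)
Lemma semidegenerate_con_total (S : signature) (Sigma : term S -> term S -> Prop) (B : algebra S)
    (th : prel B) (b : B) : semidegenerate Sigma -> inV Sigma B -> is_con th ->
  (forall o, th (interp o (fun _ => b)) b) -> forall x y, th x y.
Proof.
move=> hsd hB hth hb x y; apply: qcls_inj => //; apply: NNPP => hne.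
apply: (hsd _ (inV_quot_alg hth hB)); first by exists (qcls th x), (qcls th y).
exists (qcls th b) => o /=; apply: qcls_eq => //.
apply: (con_trans hth _ (hb o)); apply: con_interp => // i; exact: qclsK.
Qed.

Section Power.
Variables (S : signature) (I : Type) (B : algebra S).

Definition pow_alg : algebra S :=
  @Algebra S (I -> B) (fun o args l => interp o (fun i => args i l)).

Lemma eval_pow (e : nat -> pow_alg) t l : eval e t l = eval (fun n => e n l) t.
Proof.
elim: t => [n|o ts IH] //=.
by congr interp; apply: functional_extensionality => i; apply: IH.
Qed.

Lemma inV_pow_alg Sigma : inV Sigma B -> inV Sigma pow_alg.
Proof.
by move=> hB t u hs e; apply: functional_extensionality => l; rewrite !eval_pow; apply: hB.
Qed.

End Power.

Section ComplementedCongruences.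
Variables (S : signature) (Sigma : term S -> term S -> Prop).
Hypothesis hmod : con_modular_variety Sigma.
Hypothesis hsd : semidegenerate Sigma.
Variables (A : algebra S) (hA : inV Sigma A) (a0 : A).
Variables (be ga : prel A) (hbe : is_con be) (hga : is_con ga).
Hypothesis hjoin : releq (con_join be ga) (@Nabla A).
Hypothesis hmeet : releq (con_meet be ga) (@Delta A).

Let ga2 := con_meet (fst_rel hbe ga) (snd_rel hbe ga).

Let is_con_ga2 : is_con ga2.
Proof. by apply: is_con_meet; [apply: is_con_fst_rel | apply: is_con_snd_rel]. Qed.

Lemma complement_pairs_saturate de : is_con de -> subrel de be -> saturates ga2 (pairs_in hbe de).
Proof.
move=> hde hdb.
suff one p q : ga2 p q -> pairs_in hbe de p -> pairs_in hbe de q.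
  by move=> p q h; split; apply: one => //; apply: (con_sym is_con_ga2).
move=> [g1 g2] hp.
have J : con_join de ga (pfst q) (psnd q).
  apply: (con_trans (is_con_join _ _) (y := pfst p)).
    by apply: con_joinr; apply: (con_sym hga).
  apply: (con_trans (is_con_join _ _) (y := psnd p)); first by apply: con_joinl.
  by apply: con_joinr.
have M : con_meet (con_join de ga) be (pfst q) (psnd q) by split => //; apply: pair_rel.
have K : subrel (con_join de (con_meet ga be)) de.
  apply: (con_join_min hde (fun _ _ h => h)) => x y [h1 h2].
  have -> : x = y by apply/hmeet.
  exact: con_refl.
exact: (K _ _ (modular_law hmod hA hde hga hbe hdb M)).
Qed.

Lemma Delta_pairs_join_complement_total p q :
  con_join (Delta_pairs hbe be) ga2 p q.
Proof.
set Th := con_join _ _; have cTh : is_con Th by apply: is_con_join.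
have hW : forall x y, Th (pdiag hbe x) (pdiag hbe y).
  move=> x y; apply: (con_join_min (is_con_preim (@hom_pdiag _ _ _ hbe) cTh)) (proj2 (hjoin x y) I).
  - by move=> u v h; apply: con_joinl; apply: Delta_pairs_pdiag.
  - by move=> u v h; apply: con_joinr; split.
apply: (semidegenerate_con_total (b := pdiag hbe a0) hsd (inV_pair_alg hA) cTh) => o.
rewrite -hom_pdiag; exact: hW.
Qed.

Lemma complemented_sub_comm : subrel be (comm be be).
Proof.
move=> x y hxy.
have hde := is_con_comm be be.
have s1 : saturates (Delta_pairs hbe be) (pairs_in hbe (comm be be)).
  by apply: centralizes_saturates => //; apply: centralizes_comm.
have s2 := complement_pairs_saturate hde (comm_subl hbe).
have s3 := saturates_join (is_con_Delta_pairs hbe be) is_con_ga2 s1 s2.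
have /s3 h := Delta_pairs_join_complement_total (pdiag hbe x) (mkpair hbe hxy).
by apply/h; apply: con_refl.
Qed.

Lemma complemented_comm_iter n : releq (comm_iter n be) be.
Proof.
elim: n => [|n IH] //= x y; split.
- by move=> h; apply/IH; apply: comm_subl h; apply: is_con_comm_iter.
- move=> /complemented_sub_comm; apply: comm_mono => u v; exact: (proj2 (IH u v)).
Qed.

End ComplementedCongruences.

Definition lrel (T : Type) (l : list (T * T)) : prel T := fun x y => List.In (x, y) l.

Lemma lrel_app_l (T : Type) (l l' : list (T * T)) : subrel (lrel l) (lrel (l ++ l')).
Proof. by move=> x y h; apply: List.in_or_app; left. Qed.

Lemma lrel_app_r (T : Type) (l l' : list (T * T)) : subrel (lrel l') (lrel (l ++ l')).
Proof. by move=> x y h; apply: List.in_or_app; right. Qed.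

Lemma lrel_app_sub (T : Type) (l l' : list (T * T)) (a : prel T) :
  subrel (lrel l) a -> subrel (lrel l') a -> subrel (lrel (l ++ l')) a.
Proof. by move=> h h' x y hxy; case: (List.in_app_or _ _ _ hxy) => hx; [apply: h | apply: h']. Qed.

Lemma In_enum (T : finType) (x : T) : List.In x (enum T).
Proof.
have : x \in enum T by rewrite mem_enum.
by elim: (enum T) => //= y s IH; rewrite inE => /orP [/eqP -> | /IH]; auto.
Qed.

Lemma list_cover (I : finType) (X : Type) (L : I -> list X) : exists M,
  (forall i, List.incl (L i) M) /\ (forall x, List.In x M -> exists i, List.In x (L i)).
Proof.
exists (List.concat (List.map L (enum I))); split.
- move=> i x hx; apply/List.in_concat; exists (L i); split => //.
  by apply: List.in_map; apply: In_enum.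
- by move=> x /List.in_concat [l [/List.in_map_iff [i [<- _]] hx]]; exists i.
Qed.

Section Compactness.
Variables (S : signature) (B : algebra S).
Implicit Types (a b : prel B) (l : list (B * B)).

Lemma Cg_lrel_mono l l' : List.incl l l' -> subrel (Cg (lrel l)) (Cg (lrel l')).
Proof. by move=> h; apply: Cg_mono => x y /h. Qed.

(* If Nabla were not finitely generated, this congruence on B^(lists of pairs) would
   contradict semidegeneracy. *)
Definition eventually_Cg : prel (pow_alg (list (B * B)) B) :=
  fun f h => exists l0, forall l, List.incl l0 l -> Cg (lrel l) (f l) (h l).

Lemma is_con_eventually_Cg : is_con eventually_Cg.
Proof.
split; [|split; [|split]].
- by move=> f; exists nil => l _; apply: con_refl (is_con_Cg _) _.
- by move=> f h [l0 H0]; exists l0 => l hl; apply: (con_sym (is_con_Cg _)); apply: H0.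
- move=> f h k [l0 H0] [l1 H1]; exists (l0 ++ l1) => l /List.incl_app_inv [hl0 hl1].
  exact: (con_trans (is_con_Cg _) (H0 l hl0) (H1 l hl1)).
- move=> o u v H; have [L hL] := functional_choice _ H.
  have [M [hM _]] := list_cover L.
  exists M => l hl; apply: (con_interp (is_con_Cg _)) => i /=.
  by apply: (hL i); apply: List.incl_tran (hM i) hl.
Qed.

Lemma compact_Nabla Sigma : semidegenerate Sigma -> inV Sigma B -> B -> compact (@Nabla B).
Proof.
move=> hsd hB a0; apply: NNPP => hN.
have gex l : exists z, ~ Cg (lrel l) a0 z.
  apply: NNPP => hl; apply: hN; exists l => x y; split => // _.
  have hx : Cg (lrel l) a0 x by apply: NNPP => h; apply: hl; exists x.
  have hy : Cg (lrel l) a0 y by apply: NNPP => h; apply: hl; exists y.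
  exact: (con_trans (is_con_Cg _) (con_sym (is_con_Cg _) hx) hy).
have [g hg] := functional_choice _ gex.
have [l0 H0] : eventually_Cg (fun _ => a0) g.
  apply: (semidegenerate_con_total (b := (fun _ => a0) : pow_alg _ B) hsd (inV_pow_alg hB)
           is_con_eventually_Cg).
  move=> o; exists [:: (interp o (fun _ => a0), a0)] => l hl.
  by apply: sub_Cg; apply: hl; left.
exact: hg l0 (H0 l0 (List.incl_refl _)).
Qed.

(* con_join a b as a directed union of joins of finitely generated congruences. *)
Definition join_fin a b : prel B := fun x y => exists La Lb,
  subrel (lrel La) a /\ subrel (lrel Lb) b /\ con_join (Cg (lrel La)) (Cg (lrel Lb)) x y.

Lemma join_fin_app a b La Lb La' Lb' :
  subrel (lrel La) a -> subrel (lrel Lb) b -> subrel (lrel La') a -> subrel (lrel Lb') b ->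
  exists La'' Lb'', subrel (lrel La'') a /\ subrel (lrel Lb'') b /\
    subrel (con_join (Cg (lrel La)) (Cg (lrel Lb))) (con_join (Cg (lrel La'')) (Cg (lrel Lb''))) /\
    subrel (con_join (Cg (lrel La')) (Cg (lrel Lb'))) (con_join (Cg (lrel La'')) (Cg (lrel Lb''))).
Proof.
move=> ha hb ha' hb'; exists (La ++ La'), (Lb ++ Lb').
split; first exact: lrel_app_sub.
split; first exact: lrel_app_sub.
by split; apply: con_join_mono; apply: Cg_mono; [apply: lrel_app_l | apply: lrel_app_l |
  apply: lrel_app_r | apply: lrel_app_r].
Qed.

Lemma is_con_join_fin a b : is_con (join_fin a b).
Proof.
split; [|split; [|split]].
- by move=> x; exists nil, nil; do 2!split => //; apply: con_refl (is_con_join _ _) _.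
- move=> x y [La [Lb [ha [hb h]]]]; exists La, Lb; do 2!split => //.
  exact: (con_sym (is_con_join _ _) h).
- move=> x y z [La [Lb [ha [hb h]]]] [La' [Lb' [ha' [hb' h']]]].
  have [La'' [Lb'' [ha'' [hb'' [s s']]]]] := join_fin_app ha hb ha' hb'.
  exists La'', Lb''; do 2!split => //.
  exact: (con_trans (is_con_join _ _) (s _ _ h) (s' _ _ h')).
- move=> o u v H.
  have [L hL] := functional_choice (fun i LL => subrel (lrel LL.1) a /\ subrel (lrel LL.2) b /\
                   con_join (Cg (lrel LL.1)) (Cg (lrel LL.2)) (u i) (v i))
                 (fun i => let: ex_intro La (ex_intro Lb h) := H i in ex_intro _ (La, Lb) h).
  have [Ma [hMa hMa']] := list_cover (fun i => (L i).1).
  have [Mb [hMb hMb']] := list_cover (fun i => (L i).2).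
  exists Ma, Mb; split; last split.
  + by move=> x y /hMa' [i hi]; have [+ _] := hL i; apply.
  + by move=> x y /hMb' [i hi]; have [_ [+ _]] := hL i; apply.
  + apply: (con_interp (is_con_join _ _)) => i; have [_ [_ h]] := hL i.
    by apply: con_join_mono h; apply: Cg_lrel_mono.
Qed.

Lemma con_join_sub_join_fin a b : subrel (con_join a b) (join_fin a b).
Proof.
apply: con_join_min; first exact: is_con_join_fin.
- move=> x y h; exists [:: (x, y)], nil; split; first by move=> u v [[<- <-] |].
  by split => //; apply: con_joinl; apply: sub_Cg; left.
- move=> x y h; exists nil, [:: (x, y)]; split => //; split; first by move=> u v [[<- <-] |].
  by apply: con_joinr; apply: sub_Cg; left.
Qed.

Lemma join_fin_list a b l : subrel (lrel l) (join_fin a b) ->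
  exists La Lb, subrel (lrel La) a /\ subrel (lrel Lb) b /\
    subrel (lrel l) (con_join (Cg (lrel La)) (Cg (lrel Lb))).
Proof.
elim: l => [|[x0 y0] l IH] hl; first by exists nil, nil; split; [|split] => ? ? [].
have [La [Lb [ha [hb h]]]] := IH (fun u v h => hl u v (or_intror h)).
have [La' [Lb' [ha' [hb' h']]]] := hl x0 y0 (or_introl erefl).
have [La'' [Lb'' [ha'' [hb'' [s s']]]]] := join_fin_app ha hb ha' hb'.
exists La'', Lb''; do 2!split => //.
by move=> u v [[<- <-] | huv]; [apply: s' _ _ h' | apply: s _ _ (h _ _ huv)].
Qed.

End Compactness.

Lemma complemented_compact (S : signature) (Sigma : term S -> term S -> Prop) (A : algebra S) :
  con_modular_variety Sigma -> semidegenerate Sigma -> inV Sigma A -> A ->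
  forall a b : prel A, is_con a -> is_con b ->
  releq (con_join a b) (@Nabla A) -> releq (con_meet a b) (@Delta A) -> compact a.
Proof.
move=> hmod hsd hA a0 a b ha hb hj hm.
have [l hl] := compact_Nabla hsd hA a0.
have [La [Lb [ha' [hb' hl']]]] :=
  join_fin_list (l := l) (fun x y _ => con_join_sub_join_fin (proj2 (hj x y) I)).
have hLa : subrel (Cg (lrel La)) a by apply: Cg_min.
exists La => x y; split; last exact: hLa.
move=> hxy.
have hN : con_join (Cg (lrel La)) (Cg (lrel Lb)) x y.
  by apply: (Cg_min (is_con_join _ _) hl'); apply/hl.
have K : subrel (con_join (Cg (lrel La)) (con_meet (Cg (lrel Lb)) a)) (Cg (lrel La)).
  apply: (con_join_min (is_con_Cg _) (fun _ _ h => h)) => u v [hu1 hu2].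
  have -> : u = v by apply/hm; split => //; apply: Cg_min hb hb' _ _ hu1.
  exact: con_refl (is_con_Cg _) _.
exact: (K _ _ (modular_law hmod hA (is_con_Cg _) (is_con_Cg _) ha hLa (conj hN hxy))).
Qed.

(** * Prime congruences and the radical *)

Lemma chain_finite_bound (T X : Type) (R : T -> T -> Prop) (C : T -> Prop)
    (Q : X -> T -> Prop) (s0 : T) :
  C s0 -> (forall s t, C s -> C t -> R s t \/ R t s) ->
  (forall x s t, R s t -> Q x s -> Q x t) ->
  forall l : list X, (forall x, List.In x l -> exists s, C s /\ Q x s) ->
  exists s, C s /\ forall x, List.In x l -> Q x s.
Proof.
move=> h0 htot hmono; elim => [|x l IH] hl; first by exists s0.
have [s [hs hq]] := IH (fun y h => hl y (or_intror h)).
have [t [ht hqt]] := hl x (or_introl erefl).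
case: (htot s t hs ht) => hst.
- by exists t; split => // y [<- | hy] //; apply: hmono hst (hq y hy).
- by exists s; split => // y [<- | hy]; [apply: hmono hst hqt | apply: hq].
Qed.

Section PrimeCongruences.
Variables (S : signature) (Sigma : term S -> term S -> Prop).
Hypothesis hmod : con_modular_variety Sigma.
Variables (A : algebra S) (hA : inV Sigma A).
Hypothesis hK : forall a b : prel A,
  is_con a -> is_con b -> compact a -> compact b -> compact (comm a b).
Variables (al th : prel A) (hal : is_con al) (hth : is_con th) (hcth : compact th).

Definition avoiding (ph : prel A) : Prop :=
  is_con ph /\ subrel al ph /\ forall n, ~ subrel (comm_iter n th) ph.

(* This is where compactness of every comm_iter n th is needed. *)
Lemma avoiding_chain_union (C : prel A -> Prop) (s0 : prel A) : C s0 ->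
  (forall s t, C s -> C t -> subrel s t \/ subrel t s) -> (forall s, C s -> avoiding s) ->
  avoiding (fun x y => exists s, C s /\ s x y).
Proof.
move=> hs0 htot hav.
have cs s : C s -> is_con s by move=> /hav [].
have bound := chain_finite_bound hs0 htot.
split; [|split].
- split; [|split; [|split]].
  + by move=> x; exists s0; split => //; apply: con_refl (cs _ hs0) _.
  + by move=> x y [s [hs h]]; exists s; split => //; apply: con_sym (cs _ hs) _ _ h.
  + move=> x y z [s [hs h1]] [s' [hs' h2]].
    case: (htot s s' hs hs') => hss.
    * by exists s'; split => //; apply: (con_trans (cs _ hs')) h2; apply: hss.
    * by exists s; split => //; apply: (con_trans (cs _ hs) h1); apply: hss.
  + move=> o u v H.
    have [s [hs hq]] := bound _ (fun i s => s (u i) (v i)) (fun i s t h q => h _ _ q)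
      (enum 'I_(sarity o)) (fun i _ => H i).
    by exists s; split => //; apply: (con_interp (cs _ hs)) => i; apply/hq/In_enum.
- by move=> x y h; exists s0; split => //; have [_ [+ _]] := hav _ hs0; apply.
- move=> n hn; have [l hl] := compact_comm_iter n hK hth hcth.
  have [s [hs hq]] := bound _ (fun p s => s p.1 p.2) (fun p s t h q => h _ _ q) l
    (fun '(x, y) hxy => hn x y (proj2 (hl x y) (sub_Cg (X := lrel l) hxy))).
  have [_ [_ hs']] := hav _ hs; apply: (hs' n) => x y /hl hxy.
  by apply: (Cg_min (cs _ hs) _ hxy) => u v huv; apply: (hq (u, v)).
Qed.

Lemma maximal_avoiding_prime ph : avoiding ph ->
  (forall ps, avoiding ps -> subrel ph ps -> subrel ps ph) -> prime_con ph.
Proof.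
move=> [cph [halph hnot]] hmax; split => //; split.
  by move=> hN; apply: (hnot 0) => x y _; apply/hN.
move=> a b ha hb hab; apply: NNPP => hn.
have grow c : is_con c -> ~ subrel c ph -> exists i, subrel (comm_iter i th) (con_join ph c).
  move=> hc hnc; apply: NNPP => hne; apply: hnc => x y h.
  apply: (hmax (con_join ph c)); [split; [|split] | exact: con_joinl | exact: con_joinr].
  - exact: is_con_join.
  - by move=> u v /halph; apply: con_joinl.
  - by move=> n hn'; apply: hne; exists n.
have [i hi] := grow a ha (fun h => hn (or_introl h)).
have [j hj] := grow b hb (fun h => hn (or_intror h)).
apply: (hnot (maxn i j).+1) => x y /= h.
apply: (comm_join_sub hmod hA ha hb cph hab); apply: comm_mono h => u v h.
- by apply: hi; apply: comm_iter_antitone hth (leq_maxl i j) _ _ h.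
- by apply: hj; apply: comm_iter_antitone hth (leq_maxr i j) _ _ h.
Qed.

Lemma exists_maximal_avoiding : (forall n, ~ subrel (comm_iter n th) al) ->
  exists ph, avoiding ph /\ forall ps, avoiding ps -> subrel ph ps -> subrel ps ph.
Proof.
move=> hno.
pose T := {ph : prel A | avoiding ph}.
pose R (s t : T) := boolp.asbool (subrel (sval s) (sval t)).
have RP s t : R s t <-> subrel (sval s) (sval t) by split => /boolp.asboolP.
have [t tmax] : exists t, forall s, R t s -> s = t.
  apply: classical_sets.Zorn.
  - by move=> s; apply/RP.
  - by move=> r s t /RP h1 /RP h2; apply/RP => x y /h1 /h2.
  - move=> s t /RP h1 /RP h2; apply: sig_eq.
    do 2!apply: functional_extensionality => ?.
    by apply: propositional_extensionality; split; [apply: h1 | apply: h2].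
  move=> C hC; case: (classic (exists s0, C s0)) => [[s0 hs0] | hne]; last first.
    exists (exist _ al (conj hal (conj (fun x y h => h) hno))) => s hs.
    by case: hne; exists s.
  have hU : avoiding (fun x y => exists ph, (exists s, C s /\ sval s = ph) /\ ph x y).
    apply: (avoiding_chain_union (s0 := sval s0)); first by exists s0.
    - by move=> _ _ [s [hs <-]] [s' [hs' <-]]; case: (hC s s' hs hs') => /= /RP; [left | right].
    - by move=> _ [s [_ <-]]; apply: (proj2_sig s).
  exists (exist _ _ hU) => s hs; apply/RP => x y h /=.
  by exists (sval s); split => //; exists s.
exists (sval t); split; first exact: (proj2_sig t).
move=> ps hps hsub.
by have /(f_equal sval) /= -> := tmax (exist _ ps hps) (proj2 (RP t (exist _ ps hps)) hsub).
Qed.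

Lemma exists_prime_avoiding : (forall n, ~ subrel (comm_iter n th) al) ->
  exists p, prime_con p /\ subrel al p /\ ~ subrel th p.
Proof.
move=> /exists_maximal_avoiding [ph [hph hmax]].
exists ph; split; first exact: maximal_avoiding_prime.
by have [_ [hal' hnot]] := hph; split => // h; apply: (hnot 0).
Qed.

Lemma rho_sub_comm_iter : subrel th (rho al) -> exists n, subrel (comm_iter n th) al.
Proof.
move=> hsub; apply: NNPP => hne.
have [p [hp [hap hnp]]] := exists_prime_avoiding (fun n h => hne (ex_intro _ n h)).
by apply: hnp => x y /hsub; apply.
Qed.

End PrimeCongruences.

(** * Boolean congruences and the reticulation *)

Section BooleanCongruences.
Variables (S : signature) (Sigma : term S -> term S -> Prop).
Hypothesis hmod : con_modular_variety Sigma.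
Hypothesis hsd : semidegenerate Sigma.
Variables (A : algebra S) (hA : inV Sigma A) (a0 : A).
Hypothesis hK : forall a b : prel A,
  is_con a -> is_con b -> compact a -> compact b -> compact (comm a b).
Implicit Types a b : prel A.

Lemma BCon_compact a : in_BCon a -> compact a.
Proof.
by move=> [ha [b [hb [hj hm]]]]; exact: (complemented_compact hmod hsd hA a0 ha hb hj hm).
Qed.

Lemma BCon_comm_iter n a : in_BCon a -> releq (comm_iter n a) a.
Proof.
by move=> [ha [b [hb [hj hm]]]]; exact: (complemented_comm_iter hmod hsd hA a0 ha hb hj hm n).
Qed.

Lemma BCon_complement a : in_BCon a -> exists b, in_BCon b /\
  releq (con_join a b) (@Nabla A) /\ releq (con_meet a b) (@Delta A).
Proof.
move=> [ha [b [hb [hj hm]]]]; exists b; split => //; split => //; exists a; split => //; split.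
- by move=> x y; rewrite -hj; split; apply: con_joinC.
- by move=> x y; rewrite -hm; split => -[].
Qed.

Lemma BCon_releq a b : is_con b -> releq a b -> in_BCon a -> in_BCon b.
Proof.
move=> hb hab [ha [c [hc [hj hm]]]]; split => //; exists c; split => //; split.
- by move=> x y; rewrite -hj; apply: con_join_releq => u v //; rewrite hab.
- by move=> x y; rewrite -hm /con_meet hab.
Qed.

Lemma BCon_in_BL a : in_BCon a -> in_BL (lam a).
Proof.
move=> hba; have [b [hbb [hj hm]]] := BCon_complement hba.
have ha := proj1 hba; have hb := proj1 hbb.
exists b; split => //; split; first exact: BCon_compact.
split; first exact: rho_releq.
apply: rho_releq => x y; split.
- by move=> /(comm_sub_meet ha hb) /hm.
- by move=> ->; apply: con_refl; apply: is_con_comm.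
Qed.

Lemma BCon_sub_of_rho a b : in_BCon a -> is_con b -> subrel a (rho b) -> subrel a b.
Proof.
move=> hba hb hab; have ha := proj1 hba.
have [n hn] := rho_sub_comm_iter hmod hA hK hb ha (BCon_compact hba) hab.
by move=> x y /(BCon_comm_iter n hba) /hn.
Qed.

Lemma BCon_Leq_sub a b : in_BCon a -> in_BCon b -> Leq (lam a) (lam b) -> subrel a b.
Proof.
move=> ha [hb _] hab; apply: BCon_sub_of_rho => // x y h.
by apply/hab; apply: sub_rho.
Qed.

Lemma BCon_Leq_releq a b : in_BCon a -> in_BCon b -> Leq (lam a) (lam b) -> releq a b.
Proof.
move=> ha hb hab x y; split; first exact: BCon_Leq_sub.
by apply: BCon_Leq_sub => // u v; rewrite hab.
Qed.

Lemma in_BL_of_comm_iter n a : is_con a -> in_BCon (comm_iter n a) -> in_BL (lam a).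
Proof.
move=> ha hbe; set be := comm_iter n a in hbe.
have [ga [hbga [hj hm]]] := BCon_complement hbe.
have hbe' : is_con be by apply: is_con_comm_iter.
have hga := proj1 hbga.
exists ga; split => //; split; first exact: BCon_compact.
split.
- move=> x y; split => _; first exact: rho_Nabla.
  move=> p [hp [hpN _]] hsub; case: hpN => u v; split => // _.
  apply: hsub; apply: con_join_mono (proj2 (hj u v) I) => // w z.
  exact: comm_iter_antitone ha (leq0n n) _ _.
- move=> x y; rewrite /Lmeet /lam /Lbot (rho_comm ha hga x y).
  rewrite -(rho_releq hm x y) (rho_meet hbe' hga x y).
  by rewrite /con_meet (rho_comm_iter n ha x y).
Qed.

Lemma surjective_BCon_comm_iter : lamB_surjective A ->
  forall a, is_con a -> compact a -> in_BL (lam a) -> exists n, in_BCon (comm_iter n a).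
Proof.
move=> hs a ha hca hbl.
have [be [hbe hL]] := hs a ha hca hbl; have cbe := proj1 hbe.
have hba : subrel be a.
  by apply: BCon_sub_of_rho => // x y h; apply: (proj1 (hL x y)); apply: sub_rho.
have [n hn] := rho_sub_comm_iter hmod hA hK cbe ha hca (fun x y h => proj2 (hL x y) (sub_rho h)).
exists n; apply: (BCon_releq _ _ hbe); first exact: is_con_comm_iter.
move=> x y; split; last exact: hn.
by move=> /(BCon_comm_iter n hbe); apply: comm_iter_mono hba _ _.
Qed.

Lemma BCon_comm_iter_surjective :
  (forall a, is_con a -> compact a -> in_BL (lam a) -> exists n, in_BCon (comm_iter n a)) ->
  lamB_surjective A.
Proof.
move=> h3 a ha hca hbl; have [n hn] := h3 a ha hca hbl.
by exists (comm_iter n a); split => //; apply: rho_comm_iter.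
Qed.

Lemma lamB_boolean_iso_of_surjective : lamB_surjective A -> lamB_boolean_iso A.
Proof.
move=> hs; split; first by move=> a ha; split; [apply: BCon_compact | apply: BCon_in_BL].
split.
  move=> a b [ha _] [hb _]; split; first by [].
  by move=> x y; rewrite /lam /Lmeet (rho_comm ha hb) (rho_meet ha hb).
by do 3!split => //; apply: BCon_Leq_releq.
Qed.

End BooleanCongruences.

Theorem proposition4p4 (S : signature) (Sigma : term S -> term S -> Prop)
  (A : algebra S) :
  con_modular_variety Sigma -> semidegenerate Sigma -> inV Sigma A ->
  inhabited A ->
  (forall a b : prel A, is_con a -> is_con b -> compact a -> compact b ->
     compact (comm a b)) ->
  (lamB_boolean_iso A <-> lamB_surjective A) /\
  (lamB_surjective A <->
     (forall a : prel A, is_con a -> compact a -> in_BL (lam a) ->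
        exists n : nat, in_BCon (comm_iter n a))) /\
  ((forall a : prel A, is_con a -> compact a -> in_BL (lam a) ->
        exists n : nat, in_BCon (comm_iter n a)) <->
   (forall a : prel A, is_con a -> compact a ->
        (in_BL (lam a) <-> exists n : nat, in_BCon (comm_iter n a)))).
Proof.
move=> hmod hsd hA [a0] hK.
split; [|split; split].
- split; first by case=> _ [_ [_ [_ [_ ]]]].
  exact: (lamB_boolean_iso_of_surjective hmod hsd hA a0 hK).
- exact: (surjective_BCon_comm_iter hmod hsd hA a0 hK).
- exact: BCon_comm_iter_surjective.
- move=> h3 a ha hca; split; first exact: h3.
  by case=> n; apply: (in_BL_of_comm_iter hmod hsd hA a0).
- by move=> h4 a ha hca; apply: (proj1 (h4 a ha hca)).
Qed.
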